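(* Let $s \geq 3$ and let $\mathcal{C} = \mathcal{C}_0 \cup \mathcal{C}_1 \cup \cdots \cup \mathcal{C}_{s-2}$ be an $(s-1)$-tiling of $Q_n$. Let $C \in \mathcal{C}_\ell$ be a level $\ell$ cube of codimension $d$. Then for each $\rho \in \{1, \ldots, \ell\}$ and each $\ell' \in \{1, \ldots, s-2\}$, the number of cubes $C' \in \mathcal{C}_{\ell'}$ of codimension at most $d$ which are $\rho$-adjacent to $C$ is at most $d_\rho(C)$.
   Context: $Q_n$ is the hypercube on $\{0,1\}^n$. Subcubes are represented by vectors in $\{0,1,*\}^n$; a special cube is one of the form $(a_1,\dots,a_d,*,\dots,* )$, with codimension $d(C)=d$. Two disjoint cubes are adjacent if they contain vertices adjacent in $Q_n$. A tiling of $Q_n$ is a collection of pairwise disjoint special cubes covering $\{0,1\}^n$. An $(s-1)$-tiling is a sequence of tilings $\mathcal{C}_0, \mathcal{C}_1, \ldots, \mathcal{C}_{s-2}$ where $\mathcal{C}_0 = \{Q_n\}$ and, for $\ell \geq 1$, every cube of $\mathcal{C}_\ell$ is contained in some cube of $\mathcal{C}_{\ell-1}$; cubes of $\mathcal{C}_\ell$ are called level $\ell$ cubes. For a level $\ell$ cube $C$ and $0 \le i \le \ell$, let $C^{(i)}$ be the unique level $i$ cube containing $C$ (so $C^{(0)}=Q_n$, $C^{(\ell)}=C$); the $i$-codimension of $C$ is $d_i(C) = d(C^{(i)}) - d(C^{(i-1)})$ for $1 \leq i \leq \ell$, so $d(C)=\sum_{i\le \ell} d_i(C)$. For two adjacent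 cubes $C, C'$ of the $(s-1)$-tiling, their level of adjacency $\rho(C,C')$ is the minimum $i$ such that the level $i$ cubes containing $C$ and $C'$ are distinct; $C$ and $C'$ are called $\rho$-adjacent if $\rho(C,C')=\rho$. *)

From mathcomp Require Import all_boot.
Set Implicit Arguments. Unset Strict Implicit. Unset Printing Implicit Defensive.

(* Vertices of Q_n : n-tuples of booleans.
   A special cube with prefix a_1..a_d followed by stars is represented by its prefix
   [:: a_1; ...; a_d] : seq bool; its codimension is its size. *)
Definition vertex (n : nat) := (n.-tuple bool)%type.

Definition in_cube n (x : vertex n) (a : seq bool) : bool :=
  take (size a) x == a.

Definition cube_sub n (a b : seq bool) : bool :=
  [forall x : vertex n, in_cube x a ==> in_cube x b].

Definition cube_disjoint n (a b : seq bool) : bool :=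
  [forall x : vertex n, ~~ (in_cube x a && in_cube x b)].

Definition hamming n (x y : vertex n) : nat :=
  \sum_(i < n) (tnth x i != tnth y i).

Definition cube_adj n (a b : seq bool) : bool :=
  cube_disjoint n a b &&
  [exists x : vertex n, exists y : vertex n,
     [&& in_cube x a, in_cube y b & hamming x y == 1]].

Definition is_tiling n (Ts : seq (seq bool)) : Prop :=
  [/\ uniq Ts,
      all (fun a => size a <= n) Ts,
      {in Ts &, forall a b, a != b -> cube_disjoint n a b} &
      forall x : vertex n, has (in_cube x) Ts].

(* an (s-1)-tiling C_0, ..., C_{s-2}, given as T : nat -> seq (seq bool),
   level l being T l (only levels 0..s-2 are relevant) *)
Definition is_multi_tiling n s (T : nat -> seq (seq bool)) : Prop :=
  [/\ T 0 = [:: [::]],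
      (forall l, l <= s - 2 -> is_tiling n (T l)) &
      (forall l, 1 <= l <= s - 2 ->
         {in T l, forall c, has (cube_sub n c) (T l.-1)})].

Definition anc n (T : nat -> seq (seq bool)) (i : nat) (c : seq bool) :=
  head c [seq a <- T i | cube_sub n c a].

(* i-codimension d_i(C) = d(C^{(i)}) - d(C^{(i-1)}) *)
Definition dlev n (T : nat -> seq (seq bool)) (i : nat) (c : seq bool) : nat :=
  size (anc n T i c) - size (anc n T i.-1 c).

Definition rho_adj n (T : nat -> seq (seq bool)) (rho : nat) (c c' : seq bool) : bool :=
  [&& cube_adj n c c',
      anc n T rho c != anc n T rho c' &
      all (fun i => anc n T i c == anc n T i c') (iota 0 rho)].

From mathcomp Require Import all_boot.
Set Implicit Arguments. Unset Strict Implicit. Unset Printing Implicit Defensive.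

(* A special cube is its prefix a : seq bool, and everything is
   read off prefixes: a vertex x lies in a iff a is a prefix of x, the cube c
   is contained in a iff a is a prefix of c, and two cubes are disjoint iff
   neither prefix extends the other.  If C and C' are adjacent they therefore
   differ at some coordinate below both codimensions, and since adjacent
   vertices differ in exactly one coordinate, at exactly one such coordinate
   j = first_diff C C'.  When C' is rho-adjacent to C, the common ancestor
   C^(rho-1) forces j >= d(C^(rho-1)) and the distinct ancestors at level rho
   force j < d(C^(rho)).  Finally, two cubes of one tiling, both of
   codimension at most d(C) and adjacent to C at the same coordinate, agree
   wherever both are defined, hence intersect, hence coincide.  So
   C' |-> first_diff C C' injects the cubes being counted into the interval
   [d(C^(rho-1)), d(C^(rho))), whose length is d_rho(C). *)

Section Prefixes.
Variable T : eqType.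

Lemma prefix_size (a b : seq T) : prefix a b -> size a <= size b.
Proof. by move=> /prefixP [c ->]; rewrite size_cat leq_addr. Qed.

Lemma prefix_nth (x0 : T) (a b : seq T) i :
  prefix a b -> i < size a -> nth x0 a i = nth x0 b i.
Proof. by move=> /prefixP [c ->] hi; rewrite nth_cat hi. Qed.

Lemma prefix_of_agree (x0 : T) (a b : seq T) : size a <= size b ->
  (forall i, i < size a -> nth x0 a i = nth x0 b i) -> prefix a b.
Proof.
move=> hab agree; rewrite prefixE; apply/eqP/(eq_from_nth (x0 := x0)).
  by rewrite size_takel.
by move=> i; rewrite size_takel // => hi; rewrite nth_take // agree.
Qed.

Lemma prefix_comparable (x0 : T) (a b : seq T) :
  (forall i, i < size a -> i < size b -> nth x0 a i = nth x0 b i) ->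
  prefix a b || prefix b a.
Proof.
move=> agree; case: (leqP (size a) (size b)) => hab.
  by rewrite (@prefix_of_agree x0) // => i hi; rewrite agree //; exact: leq_trans hi hab.
rewrite orbC (@prefix_of_agree x0) ?(ltnW hab) // => i hi.
by rewrite agree //; exact: ltn_trans hi hab.
Qed.

Lemma prefix_common (a b c : seq T) : prefix a c -> prefix b c -> prefix a b || prefix b a.
Proof.
rewrite !prefixE => /eqP hac /eqP hbc; case: (leqP (size a) (size b)) => hab.
  by rewrite -hbc take_takel // hac eqxx.
by rewrite -hac take_takel ?(ltnW hab) // hbc eqxx orbT.
Qed.

End Prefixes.

Arguments prefix_size {T} [a b].
Arguments prefix_nth {T} x0 [a b i].
Arguments prefix_of_agree {T} x0 [a b].
Arguments prefix_comparable {T} x0 [a b].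
Arguments prefix_common {T} [a b c].

Definition first_diff (a b : seq bool) : nat :=
  find (fun i => nth false a i != nth false b i) (iota 0 (minn (size a) (size b))).

Lemma first_diff_spec (a b : seq bool) : ~~ (prefix a b || prefix b a) ->
  [/\ first_diff a b < size a, first_diff a b < size b
    & nth false a (first_diff a b) != nth false b (first_diff a b)].
Proof.
move=> incomparable.
have hdiff : has (fun i => nth false a i != nth false b i) (iota 0 (minn (size a) (size b))).
  move: incomparable; apply: contraR => /hasPn same.
  apply: (prefix_comparable false) => i ha hb.
  by apply/eqP/negPn/same; rewrite mem_iota add0n leq_min ha hb.
have := nth_find 0 hdiff; move: (hdiff); rewrite has_find size_iota => hj.
rewrite nth_iota // add0n; move: hj; rewrite leq_min => /andP [ha hb].
by split.
Qed.

Lemma hamming1_unique n (x y : vertex n) i k : hamming x y = 1 -> i < n -> k < n ->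
  nth false x i != nth false y i -> nth false x k != nth false y k -> i = k.
Proof.
move=> hxy hi hk di dk; apply/eqP/negPn/negP => ne.
have ne' : Ordinal hk != Ordinal hi by apply: contra ne => /eqP [->].
move: hxy; rewrite /hamming (bigD1 (Ordinal hi)) //= (bigD1 (Ordinal hk)) /=; last by rewrite ne'.
by rewrite !(tnth_nth false) /= di dk.
Qed.

Section Cubes.
Variable n : nat.

Definition extend (a : seq bool) (b : bool) : vertex n := [tuple nth b a i | i < n].

Lemma nth_extend a b i : i < n -> nth false (extend a b) i = nth b a i.
Proof.
move=> hi; have := tnth_nth false (extend a b) (Ordinal hi).
by rewrite tnth_mktuple /= => <-.
Qed.

Lemma prefix_extend a b : size a <= n -> prefix a (extend a b).
Proof.
move=> ha; apply: (prefix_of_agree false); first by rewrite size_tuple.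
move=> i hi; rewrite nth_extend; last exact: leq_trans hi ha.
exact: set_nth_default.
Qed.

Lemma in_cubeE (x : vertex n) a : in_cube x a = prefix a x.
Proof. by rewrite /in_cube prefixE. Qed.

(* For the direct
   implication, a is a prefix of both paddings of c; being longer than c would
   force its entry at position size c to be both false and true. *)
Lemma cube_subE c a : size c <= n -> cube_sub n c a = prefix a c.
Proof.
move=> hc; apply/forallP/idP => [sub | hac x]; last first.
  by apply/implyP; rewrite !in_cubeE => /(prefix_trans hac).
have ext b : prefix a (extend c b).
  by rewrite -in_cubeE (implyP (sub _)) ?in_cubeE ?prefix_extend.
case/orP: (prefix_common (ext false) (prefix_extend false hc)) => // hca.
case: (ltnP (size c) (size a)) => [hlt | hle]; last first.
  apply: (prefix_of_agree false hle) => i hi.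
  by rewrite (prefix_nth false hca) // (leq_trans hi hle).
have an b : nth false a (size c) = b.
  have hcn : size c < n.
    by rewrite -(size_tuple (extend c b)) (leq_trans hlt (prefix_size (ext b))).
  by rewrite (prefix_nth false (ext b) hlt) nth_extend // nth_default.
by have := an false; rewrite (an true).
Qed.

Lemma cube_disjointE a b : size a <= n -> size b <= n ->
  cube_disjoint n a b = ~~ (prefix a b || prefix b a).
Proof.
move=> ha hb; apply/forallP/idP => [disj | incomparable x].
  apply/negP => /orP [hab | hba].
    by have := disj (extend b false); rewrite !in_cubeE prefix_extend // (prefix_trans hab) ?prefix_extend.
  by have := disj (extend a false); rewrite !in_cubeE prefix_extend // (prefix_trans hba) ?prefix_extend.
apply/negP => /andP []; rewrite !in_cubeE => hax hbx.
by rewrite (prefix_common hax hbx) in incomparable.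
Qed.

Lemma adjacent_diff a b : size a <= n -> size b <= n -> cube_adj n a b ->
  [/\ first_diff a b < size a, first_diff a b < size b,
      nth false a (first_diff a b) != nth false b (first_diff a b)
    & forall i, i < size a -> i < size b -> i != first_diff a b ->
        nth false a i = nth false b i].
Proof.
move=> ha hb /andP []; rewrite cube_disjointE // => incomparable.
move=> /existsP [x /existsP [y /and3P [hx hy /eqP hxy]]].
rewrite in_cubeE in hx; rewrite in_cubeE in hy.
have [ja jb dj] := first_diff_spec incomparable.
split => // i ia ib; apply: contraNeq => di; apply/eqP.
apply: (hamming1_unique hxy (leq_trans ia ha) (leq_trans ja ha)).
  by rewrite -(prefix_nth false hx) // -(prefix_nth false hy).
by rewrite -(prefix_nth false hx) // -(prefix_nth false hy).
Qed.

Lemma tiling_size Ts a : is_tiling n Ts -> a \in Ts -> size a <= n.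
Proof. by case=> _ /allP sizes _ _ /sizes. Qed.

Lemma tiling_comparable_eq Ts a b : is_tiling n Ts -> a \in Ts -> b \in Ts ->
  prefix a b || prefix b a -> a = b.
Proof.
move=> tiling ha hb comparable; case: (eqVneq a b) => // neq.
have [_ _ disj _] := tiling; move: (disj _ _ ha hb neq).
by rewrite cube_disjointE ?comparable ?(tiling_size tiling).
Qed.

Lemma anc_sub T i c : cube_sub n c (anc n T i c).
Proof.
rewrite /anc; case E: [seq a <- T i | cube_sub n c a] => [|h t] /=.
  by apply/forallP => x; apply/implyP.
have : h \in [seq a <- T i | cube_sub n c a] by rewrite E inE eqxx.
by rewrite mem_filter => /andP [].
Qed.

Lemma anc_cases T i c : anc n T i c = c \/ anc n T i c \in T i.
Proof.
rewrite /anc; case E: [seq a <- T i | cube_sub n c a] => [|h t] /=; first by left.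
right; have : h \in [seq a <- T i | cube_sub n c a] by rewrite E inE eqxx.
by rewrite mem_filter => /andP [].
Qed.

Lemma anc_eq T i c a : is_tiling n (T i) -> size c <= n -> a \in T i ->
  cube_sub n c a -> anc n T i c = a.
Proof.
move=> tiling hc ha sa; rewrite /anc.
have hin : a \in [seq a <- T i | cube_sub n c a] by rewrite mem_filter sa ha.
case E: [seq a <- T i | cube_sub n c a] hin => [|h t] //= _.
have : h \in [seq a <- T i | cube_sub n c a] by rewrite E inE eqxx.
rewrite mem_filter => /andP [sh hh]; apply: (tiling_comparable_eq tiling hh ha).
by rewrite !cube_subE // in sa sh; rewrite (prefix_common sh sa).
Qed.

Lemma rho_adj_diff_range T rho C C' : is_tiling n (T rho) -> 0 < rho ->
  size C <= n -> size C' <= n -> rho_adj n T rho C C' ->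
  size (anc n T rho.-1 C) <= first_diff C C' < size (anc n T rho C).
Proof.
move=> tiling rho_gt0 hC hC' /and3P [adj anc_neq /allP anc_same].
have [jC jC' dj agree] := adjacent_diff hC hC' adj.
have pA : prefix (anc n T rho.-1 C) C by rewrite -cube_subE // anc_sub.
have pA' : prefix (anc n T rho.-1 C) C'.
  rewrite -cube_subE // (eqP (anc_same _ _)) ?anc_sub //.
  by rewrite mem_iota add0n leq0n ltn_predL.
have pB : prefix (anc n T rho C) C by rewrite -cube_subE // anc_sub.
apply/andP; split.
  rewrite leqNgt; apply: contra dj => hj.
  by rewrite -(prefix_nth false pA) // -(prefix_nth false pA') ?eqxx.
rewrite ltnNge; apply/negP => hle.
(* Below j the cubes agree, so C^(rho), of codimension <= j, contains C'. *)
have pB' : prefix (anc n T rho C) C'.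
  apply: (prefix_of_agree false); first exact: leq_trans hle (ltnW jC').
  move=> i hi; rewrite (prefix_nth false pB) // agree //.
  - exact: leq_trans hi (prefix_size pB).
  - exact: leq_trans hi (leq_trans hle (ltnW jC')).
  - by rewrite neq_ltn (leq_trans hi hle).
(* C^(rho) is now a prefix of C': if it is C itself this contradicts
   disjointness, and if it is a tile of level rho it is also C'^(rho). *)
case: (anc_cases T rho C) => hB.
  move: adj pB'; rewrite hB /cube_adj cube_disjointE // => /andP [+ _].
  by move=> /negP incomparable pCC'; apply: incomparable; rewrite pCC'.
move: anc_neq; rewrite (@anc_eq T rho C' (anc n T rho C)) ?eqxx //.
by rewrite cube_subE.
Qed.

Lemma first_diff_inj Ts C C1 C2 : is_tiling n Ts -> C1 \in Ts -> C2 \in Ts ->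
  size C <= n -> size C1 <= size C -> size C2 <= size C ->
  cube_adj n C C1 -> cube_adj n C C2 -> first_diff C C1 = first_diff C C2 -> C1 = C2.
Proof.
move=> tiling h1 h2 hC s1 s2 adj1 adj2 same_j.
have [_ j1 d1 agree1] := adjacent_diff hC (tiling_size tiling h1) adj1.
have [_ j2 d2 agree2] := adjacent_diff hC (tiling_size tiling h2) adj2.
apply: (tiling_comparable_eq tiling h1 h2); apply: (prefix_comparable false) => i i1 i2.
have iC : i < size C := leq_trans i1 s1.
case: (eqVneq i (first_diff C C1)) => [-> | ne].
  by move: d1 d2; rewrite -same_j; do 3 case: nth.
by rewrite -agree1 // agree2 // -same_j.
Qed.

End Cubes.

Lemma count_le_inj_range (T : eqType) (s : seq T) (P : pred T) (f : T -> nat) (a b : nat) :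
  uniq s -> {in [seq x <- s | P x] &, injective f} ->
  (forall x, x \in s -> P x -> a <= f x < b) -> count P s <= b - a.
Proof.
move=> us inj range; rewrite -size_filter -(size_map f) -(size_iota a (b - a)).
apply: uniq_leq_size; first by rewrite map_inj_in_uniq // filter_uniq.
move=> j /mapP [x]; rewrite mem_filter => /andP [Px xs] ->.
have /andP [ha hb] := range x xs Px.
by rewrite mem_iota ha subnKC // (leq_trans ha (ltnW hb)).
Qed.

Theorem proposition4p4 (n s : nat) (T : nat -> seq (seq bool))
  (hs : 3 <= s) (hT : is_multi_tiling n s T)
  (l : nat) (hl : l <= s - 2) (C : seq bool) (hC : C \in T l)
  (rho l' : nat) (hrho : 1 <= rho <= l) (hl' : 1 <= l' <= s - 2) :
  count (fun C' => (size C' <= size C) && rho_adj n T rho C C') (T l')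
    <= dlev n T rho C.
Proof.
case: hT => _ tilings _; case/andP: hrho => rho_gt0 rho_le; case/andP: hl' => _ hl'.
have tiling_l' : is_tiling n (T l') := tilings _ hl'.
have tiling_rho : is_tiling n (T rho) := tilings _ (leq_trans rho_le hl).
have hCn : size C <= n := tiling_size (tilings _ hl) hC.
apply: (count_le_inj_range (f := first_diff C)); first by case: tiling_l'.
  move=> C1 C2; rewrite !mem_filter.
  move=> /andP [/andP [s1 /andP [adj1 _]] h1] /andP [/andP [s2 /andP [adj2 _]] h2].
  exact: first_diff_inj tiling_l' h1 h2 hCn s1 s2 adj1 adj2.
move=> C' hC' /andP [_ adj].
exact: rho_adj_diff_range tiling_rho rho_gt0 hCn (tiling_size tiling_l' hC') adj.
Qed.
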